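(* Let $j\ge 0$ be an integer and let $g_0^{j+1},\dots,g_j^{j+1}$ be real numbers with $$g_j^{j+1}>g_{j-1}^{j+1}>\dots>g_0^{j+1}>0,$$ and set $g_{-1}^{j+1}:=0$ (this convention is only needed when $j=0$). For any real numbers $v^0,v^1,\dots,v^{j+1}$ define $${}_g\Delta v:=\sum_{s=0}^{j}\big(v^{s+1}-v^s\big)g_s^{j+1},\qquad {}_g\Delta (v^2):=\sum_{s=0}^{j}\big((v^{s+1})^2-(v^s)^2\big)g_s^{j+1}.$$ Then $$v^{j+1}\,{}_g\Delta v\;\ge\;\tfrac12\,{}_g\Delta(v^2)+\frac{1}{2g_j^{j+1}}\big({}_g\Delta v\big)^2,$$ $$v^{j}\,{}_g\Delta v\;\ge\;\tfrac12\,{}_g\Delta(v^2)-\frac{1}{2\big(g_j^{j+1}-g_{j-1}^{j+1}\big)}\big({}_g\Delta v\big)^2.$$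
   Context: The paper states this for every $j=0,1,\dots,M-1$ and for functions $v$ defined on a time mesh $0=t_0<t_1<\dots<t_M=T$, with $v^s=v(t_s)$; the expression ${}_g\Delta v$ is a discrete analog of the Caputo fractional derivative at time level $j+1$. *)

From mathcomp Require Import all_boot all_order all_algebra.
Set Implicit Arguments. Unset Strict Implicit. Unset Printing Implicit Defensive.
Import Order.TTheory GRing.Theory Num.Theory.
Local Open Scope ring_scope.

Definition gDelta {R : pzRingType} (j : nat) (g v : nat -> R) : R :=
  \sum_(0 <= s < j.+1) (v s.+1 - v s) * g s.

Definition gDelta_sq {R : pzRingType} (j : nat) (g v : nat -> R) : R :=
  \sum_(0 <= s < j.+1) (v s.+1 ^+ 2 - v s ^+ 2) * g s.

Definition g_prev {R : pzRingType} (j : nat) (g : nat -> R) : R :=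
  if j is j'.+1 then g j' else 0.

(* With the weights [w_m := g_m - g_(m-1)], which are positive and sum to
   [g_j], summation by parts rewrites both differences as weighted sums of the
   deviations [e_m := v^(j+1) - v^m]:
     [gDelta v = \sum_m w_m e_m]  and
     [2 v^(j+1) gDelta v - gDelta (v^2) = \sum_m w_m e_m^2].
   The first inequality is then the weighted Cauchy-Schwarz inequality for this
   sum of weights, and the second one follows from the single term
   [w_j e_j^2] of the second sum together with the AM-GM inequality
   [e_j x <= (w_j e_j^2 + x^2 / w_j) / 2]. *)

From mathcomp Require Import all_boot all_order all_algebra.
From mathcomp Require Import ring lra.
Set Implicit Arguments. Unset Strict Implicit. Unset Printing Implicit Defensive.
Import Order.TTheory GRing.Theory Num.Theory.
Local Open Scope ring_scope.

Definition gstep {R : pzRingType} (g : nat -> R) (m : nat) : R :=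
  g m - g_prev m g.

Section SummationByParts.
Variable R : comPzRingType.

Lemma sum_gstep (g : nat -> R) (n : nat) :
  \sum_(0 <= m < n) gstep g m = g_prev n g.
Proof.
elim: n => [|n IH]; first by rewrite big_nil.
by rewrite big_nat_recr //= IH /gstep; case: n {IH} => [|n] /=; ring.
Qed.

Lemma sum_by_parts_gstep (g f : nat -> R) (n : nat) :
  \sum_(0 <= s < n) (f s - f s.+1) * g s =
  \sum_(0 <= m < n) gstep g m * (f m - f n).
Proof.
elim: n => [|n IH]; first by rewrite !big_nil.
rewrite !big_nat_recr //= IH.
have -> : \sum_(0 <= m < n) gstep g m * (f m - f n.+1) =
    \sum_(0 <= m < n) gstep g m * (f m - f n) +
    (f n - f n.+1) * \sum_(0 <= m < n) gstep g m.
  by rewrite mulr_sumr -big_split; apply: eq_bigr => m _ /=; ring.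
by rewrite sum_gstep /gstep; ring.
Qed.

Lemma gDelta_by_parts (j : nat) (g v : nat -> R) :
  gDelta j g v = \sum_(0 <= m < j.+1) gstep g m * (v j.+1 - v m).
Proof.
have -> : gDelta j g v = \sum_(0 <= s < j.+1) (- v s - - v s.+1) * g s.
  by apply: eq_bigr => s _; ring.
by rewrite sum_by_parts_gstep; apply: eq_bigr => m _; ring.
Qed.

Lemma gDelta_sq_by_parts (j : nat) (g v : nat -> R) :
  2 * v j.+1 * gDelta j g v - gDelta_sq j g v =
  \sum_(0 <= m < j.+1) gstep g m * (v j.+1 - v m) ^+ 2.
Proof.
pose f s := (v j.+1 - v s) ^+ 2.
have -> : \sum_(0 <= m < j.+1) gstep g m * (v j.+1 - v m) ^+ 2 =
    \sum_(0 <= m < j.+1) gstep g m * (f m - f j.+1).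
  by apply: eq_bigr => m _; rewrite /f subrr expr0n subr0.
rewrite -sum_by_parts_gstep.
rewrite (eq_bigr (fun s => 2 * v j.+1 * ((v s.+1 - v s) * g s) -
                           (v s.+1 ^+ 2 - v s ^+ 2) * g s)); last first.
  by move=> s _; rewrite /f; ring.
by rewrite sumrB -mulr_sumr.
Qed.

End SummationByParts.

Section WeightedSums.
Variable R : realFieldType.

Lemma mul_le_half_sq (a e x : R) : 0 < a ->
  e * x <= (a * e ^+ 2 + x ^+ 2 / a) / 2.
Proof.
move=> a_gt0; rewrite -subr_ge0.
have -> : (a * e ^+ 2 + x ^+ 2 / a) / 2 - e * x = (a * e - x) ^+ 2 / (2 * a).
  by field; rewrite gt_eqF.
by rewrite divr_ge0 ?sqr_ge0 ?mulr_ge0 ?ltW.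
Qed.

Lemma weighted_cauchy_schwarz (n : nat) (w e : nat -> R) :
  (forall m, (m < n)%N -> 0 <= w m) ->
  (\sum_(0 <= m < n) w m * e m) ^+ 2 <=
  (\sum_(0 <= m < n) w m) * \sum_(0 <= m < n) w m * e m ^+ 2.
Proof.
move=> w_ge0; set W := \sum_(0 <= m < n) w m.
set X := \sum_(0 <= m < n) w m * e m; set Y := \sum_(0 <= m < n) w m * e m ^+ 2.
have wsq_ge0 (f : nat -> R) : 0 <= \sum_(0 <= m < n) w m * f m ^+ 2.
  rewrite big_nat; apply: sumr_ge0 => m /andP[_ lt_mn].
  by rewrite mulr_ge0 ?sqr_ge0 ?w_ge0.
have W_ge0 : 0 <= W by rewrite /W big_nat sumr_ge0 // => m /andP[_ /w_ge0].
have [W_gt0 | W_le0] := ltrP 0 W.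
  pose t := X / W.
  have := wsq_ge0 (fun m => e m - t).
  have -> : \sum_(0 <= m < n) w m * (e m - t) ^+ 2 = Y - 2 * t * X + t ^+ 2 * W.
    rewrite /Y /X /W !mulr_sumr -sumrB -big_split /=.
    by apply: eq_bigr => m _; ring.
  have -> : Y - 2 * t * X + t ^+ 2 * W = Y - X ^+ 2 / W.
    by rewrite /t; field; rewrite gt_eqF.
  by rewrite subr_ge0 ler_pdivrMr // mulrC.
have W0 : W = 0 by apply/eqP; rewrite eq_le W_le0 W_ge0.
have w0 m : (m < n)%N -> w m = 0.
  move: W0; rewrite /W big_mkord => /psumr_eq0P w0' lt_mn.
  by apply: (w0' _ (Ordinal lt_mn)) => // i _; apply: w_ge0.
have X0 : X = 0 by rewrite /X big_nat big1 // => m /andP[_ /w0 ->]; rewrite mul0r.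
by rewrite W0 X0 expr0n mul0r.
Qed.

End WeightedSums.

Section IncreasingWeights.
Variables (R : realFieldType) (j : nat) (g : nat -> R).
Hypotheses (g0_gt0 : 0 < g 0%N) (g_incr : forall s, (s < j)%N -> g s < g s.+1).

Lemma gstep_gt0 m : (m <= j)%N -> 0 < gstep g m.
Proof.
case: m => [|m] le_mj; first by rewrite /gstep subr0.
by rewrite /gstep subr_gt0 g_incr.
Qed.

Lemma g_last_gt0 : 0 < g j.
Proof.
rewrite -[g j]/(g_prev j.+1 g) -sum_gstep big_nat_recr //= ltr_wpDl ?gstep_gt0 //.
by rewrite big_nat sumr_ge0 // => m /andP[_ lt_mj]; rewrite ltW // gstep_gt0 // ltnW.
Qed.

End IncreasingWeights.

Theorem lemma1 (R : realFieldType) (j : nat) (g v : nat -> R)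
  (hg0 : 0 < g 0%N)
  (hginc : forall s : nat, (s < j)%N -> g s < g s.+1) :
  v j.+1 * gDelta j g v >= gDelta_sq j g v / 2 + (gDelta j g v) ^+ 2 / (2 * g j)
  /\
  v j * gDelta j g v >= gDelta_sq j g v / 2 - (gDelta j g v) ^+ 2 / (2 * (g j - g_prev j g)).
Proof.
set X := gDelta j g v; set S := gDelta_sq j g v.
set Y := \sum_(0 <= m < j.+1) gstep g m * (v j.+1 - v m) ^+ 2.
have w_gt0 := gstep_gt0 hg0 hginc.
have S_eq : S = 2 * v j.+1 * X - Y by rewrite /Y -gDelta_sq_by_parts /S /X; ring.
split.
- have gj_gt0 := g_last_gt0 hg0 hginc.
  have CS : X ^+ 2 <= g j * Y.
    rewrite /X gDelta_by_parts -[g j]/(g_prev j.+1 g) -sum_gstep.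
    by apply: weighted_cauchy_schwarz => m lt_mj; rewrite ltW // w_gt0.
  have -> : S / 2 + X ^+ 2 / (2 * g j) = v j.+1 * X - (Y - X ^+ 2 / g j) / 2.
    by rewrite S_eq; field; rewrite gt_eqF.
  by rewrite lerBlDr lerDl divr_ge0 // subr_ge0 ler_pdivrMr // mulrC.
- have wj_gt0 : 0 < gstep g j by apply: w_gt0.
  have Y_ge_last : gstep g j * (v j.+1 - v j) ^+ 2 <= Y.
    rewrite /Y big_nat_recr //= lerDr big_nat sumr_ge0 // => m /andP[_ lt_mj].
    by rewrite mulr_ge0 ?sqr_ge0 // ltW // w_gt0 // ltnW.
  have AMGM := mul_le_half_sq (v j.+1 - v j) X wj_gt0.
  have -> : S / 2 - X ^+ 2 / (2 * (g j - g_prev j g)) =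
      v j.+1 * X - (Y + X ^+ 2 / gstep g j) / 2.
    by rewrite S_eq /gstep; field; rewrite -/(gstep g j) gt_eqF.
  have -> : v j * X = v j.+1 * X - (v j.+1 - v j) * X by ring.
  lra.
Qed.
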